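(* Let $\mathbb{K}$ be any field and let $p_1,\ldots,p_m\in\mathbb{K}[x]$ be tame polynomials. Let $k_1,\ldots,k_m,k$ be the orders of the groups $\Gamma_\mathbb{K}(p_1),\ldots,\Gamma_\mathbb{K}(p_m),\Gamma_\mathbb{K}(p_1\circ\cdots\circ p_m)$. Then $k$ divides $k_1k_2\cdots k_m$.
   Context: A polynomial $f\in\mathbb{K}[x]$ is called tame if $\mathrm{char}\,\mathbb{K}$ does not divide $\deg f$ (in particular a tame polynomial is non-constant). Composition is $g\circ h=g(h(x))$. For a non-constant rational function $f\in\mathbb{K}(x)$, its fixing group is $\Gamma_\mathbb{K}(f)=\{u=\frac{ax+b}{cx+d}: a,b,c,d\in\mathbb{K},\ ad-bc\neq 0,\ f\circ u=f\}$, a group under composition; it is finite, its order dividing $\deg f$. *)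

From HB Require Import structures.
From mathcomp Require Import all_boot all_order all_algebra.
Set Implicit Arguments. Unset Strict Implicit. Unset Printing Implicit Defensive.
Import GRing.Theory.
Local Open Scope ring_scope.

Notation ratf K := {fraction {poly K}}.
Notation polyF p := (@FracField.tofrac _ p).

(* deg f = (size f).-1 ; tame: char K does not divide deg f.
   char 0: no prime in [pchar K], and "0 divides n" means n = 0. *)
Definition tame (K : fieldType) (f : {poly K}) : Prop :=
  ((size f).-1 != 0)%N /\ forall q : nat, q \in [pchar K] -> ~~ (q %| (size f).-1)%N.

Definition mobius (K : fieldType) (u : ratf K) : Prop :=
  exists a b c d : K, a * d - b * c != 0 /\
    u = polyF (a *: 'X + b%:P) / polyF (c *: 'X + d%:P).

Definition rcomp (K : fieldType) (f : {poly K}) (u : ratf K) : ratf K :=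
  (map_poly (fun c : {poly K} => polyF c) (map_poly polyC f)).[u].

Definition in_fixing_group (K : fieldType) (f : {poly K}) (u : ratf K) : Prop :=
  mobius u /\ rcomp f u = polyF f.

Definition fixing_group_order (K : fieldType) (f : {poly K}) (k : nat) : Prop :=
  exists s : seq (ratf K), [/\ uniq s, (forall u, u \in s <-> in_fixing_group f u) & size s = k].

Definition compose_list (K : fieldType) (ps : seq {poly K}) : {poly K} :=
  foldr (fun p acc => p \Po acc) 'X ps.

(* For tame f every u in Gamma(f) is affine: a pole of u would survive in f o u.
   A tame polynomial has no nontrivial translation symmetry (p(x + c) - p(x) has
   degree deg p - 1 and leading coefficient c deg p lc(p)), so ax + b |-> a embeds
   Gamma(f) into K^*, and k = |Gamma(p_1 o ... o p_m)| divides N as soon as a^N = 1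
   for every slope a of that group.
   If ax + b fixes p o Q with p tame and m = deg Q, comparing degrees in
   p(Q(ax + b)) = p(Q) forces Q(ax + b) = a^m Q + c and p(a^m x + c) = p; hence
   (a^(k_1))^m = 1.  Applied to a^(k_1), this makes the map fixing p a translation,
   hence trivial, so a^(k_1) is a slope of Gamma(Q), and induction on m gives
   a^(k_1 ... k_m) = 1. *)

From mathcomp Require Import all_boot all_order all_algebra.
From mathcomp Require Import ring.
Import GRing.Theory.
Local Open Scope ring_scope.

Local Notation affine a b := (a *: 'X + b%:P).

Lemma uniq_rel_image (T U : eqType) (R : T -> U -> Prop) (s : seq T) :
  uniq s -> (forall x, x \in s -> exists y, R x y) ->
  (forall x y1 y2, R x y1 -> R x y2 -> y1 = y2) ->
  {in s &, forall x1 x2 y, R x1 y -> R x2 y -> x1 = x2} ->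
  exists l : seq U, [/\ uniq l, size l = size s &
    forall y, y \in l <-> exists2 x, x \in s & R x y].
Proof.
elim: s => [|x s IHs] /=.
  by move=> _ _ _ _; exists [::]; split=> // y; split=> // [[]].
case/andP=> xNs us totR funR injR.
have [|||l [ul sl memlP]] := IHs us.
- by move=> z zs; apply: totR; rewrite inE zs orbT.
- exact: funR.
- by move=> x1 x2 x1s x2s; apply: injR; rewrite inE ?x1s ?x2s orbT.
have [y Rxy] := totR x (mem_head _ _).
exists (y :: l); split=> /=; last 1 first.
- move=> z; rewrite inE; split.
    case/orP => [/eqP-> | /memlP[x' x's Rx'z]]; first by exists x; rewrite ?mem_head.
    by exists x'; rewrite // inE x's orbT.
  case=> x'; rewrite inE => /orP[/eqP-> Rxz | x's Rx'z]; first by rewrite (funR _ _ _ Rxz Rxy) eqxx.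
  by apply/orP; right; apply/memlP; exists x'.
- rewrite ul andbT; apply/negP => /memlP[x' x's Rx'y].
  have x's' : x' \in x :: s by rewrite inE x's orbT.
  by move: xNs; rewrite -(injR _ _ x's' (mem_head _ _) _ Rx'y Rxy) x's.
- by rewrite sl.
Qed.

Section FixingGroup.
Context {K : fieldType}.
Implicit Types (f g h p q r A B Q : {poly K}) (a b c : K).

(* Multiplication by a permutes l, so prod l = a ^+ size l * prod l. *)
Lemma expr_size_mul_closed {l : seq K} : uniq l -> 0 \notin l ->
  {in l &, forall x y, x * y \in l} -> {in l, forall a, a ^+ size l = 1}.
Proof.
move=> ul l0 mull a al; have a0 : a != 0 by apply: contraNneq l0 => <-.
have ual : uniq (map ( *%R a) l) by rewrite map_inj_uniq //; exact: mulfI.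
have sub_al : {subset map ( *%R a) l <= l} by move=> _ /mapP[x xl ->]; exact: mull.
have [_ eq_al] := uniq_min_size ual sub_al (eq_leq (esym (size_map _ _))).
have := perm_big (op := *%R) (x := 1) (P := predT) (F := id) _ (uniq_perm ual ul eq_al).
rewrite big_map big_split /= big_const_seq count_predT iter_mulr_1 -[RHS]mul1r.
apply: mulIf; rewrite prodf_seq_neq0; apply/allP => x xl /=.
by apply: contraNneq l0 => <-.
Qed.

Lemma dvdn_size_mul_closed {l : seq K} {N : nat} : uniq l -> 0 \notin l -> 1 \in l ->
  {in l &, forall x y, x * y \in l} -> {in l, forall a, a ^+ N = 1} ->
  (size l %| N)%N.
Proof.
move=> ul l0 l1 mull lN; set k := size l.
have k_gt0 : (0 < k)%N by rewrite /k; case: (l) l1.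
have lNk a : a \in l -> a ^+ (N %% k) = 1.
  by move=> al; rewrite expr_mod; [exact: lN | exact: expr_size_mul_closed].
apply: contraT; rewrite /dvdn -lt0n => Nk_gt0.
have := @max_poly_roots _ ('X^(N %% k) - 1%:P) l _ _ ul.
rewrite size_XnsubC // ltnS leqNgt ltn_pmod //; apply.
  by rewrite -size_poly_eq0 size_XnsubC.
by apply/allP => x xl; rewrite rootE !hornerE lNk // subrr.
Qed.

Lemma tame_size_gt1 {p} : tame p -> (1 < size p)%N.
Proof. by case; case: (size p) => [|[|]]. Qed.

Lemma tame_natr_deg_neq0 {p} : tame p -> ((size p).-1)%:R != 0 :> K.
Proof.
case=> nz hc; apply/negP => h0.
have [|q hq] := natf0_pchar (_ : 0 < _)%N h0; first by rewrite lt0n.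
by move: (hc q hq); rewrite (dvdn_pcharf hq) h0.
Qed.

Lemma tame_comp p q : tame p -> tame q -> tame (p \Po q).
Proof.
move=> [np hp] [nq hq]; rewrite /tame size_comp_poly muln_eq0 negb_or np nq.
split=> // r hr; rewrite Euclid_dvdM ?(pcharf_prime hr) // negb_or.
by rewrite hp ?hq.
Qed.

Lemma tame_polyX : tame ('X : {poly K}).
Proof.
rewrite /tame size_polyX; split=> // r hr.
by rewrite Euclid_dvd1 // (pcharf_prime hr).
Qed.

Lemma tame_compose_list {ps : seq {poly K}} :
  (forall i, (i < size ps)%N -> tame (nth 0 ps i)) -> tame (compose_list ps).
Proof.
elim: ps => [|p ps IH] tps /=; first exact: tame_polyX.
by apply: tame_comp; [exact: (tps 0%N) | apply: IH => i; apply: (tps i.+1)].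
Qed.

Lemma size_affine a b : a != 0 -> size (affine a b) = 2%N.
Proof.
move=> a0; rewrite size_polyDl ?size_scale ?size_polyX //.
by rewrite (leq_ltn_trans (size_polyC_leq1 b)) // size_scale ?size_polyX.
Qed.

Lemma lead_coef_affine a b : a != 0 -> lead_coef (affine a b) = a.
Proof.
move=> a0; rewrite lead_coefDl ?lead_coefZ ?lead_coefX ?mulr1 //.
by rewrite (leq_ltn_trans (size_polyC_leq1 b)) // size_scale ?size_polyX.
Qed.

Lemma comp_affine a b c d :
  affine a b \Po affine c d = affine (a * c) (a * d + b).
Proof.
rewrite comp_polyD comp_polyZ comp_polyX comp_polyC scalerDr scalerA -addrA.
by rewrite polyCD polyCM mul_polyC.
Qed.

Lemma size_subr_lt p q : p != 0 -> size p = size q ->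
  lead_coef p = lead_coef q -> (size (p - q)%R < size p)%N.
Proof.
move=> p0 spq lpq; have le : (size (p - q)%R <= size p)%N.
  by rewrite (leq_trans (size_polyD _ _)) // size_polyN spq maxnn.
rewrite ltn_neqAle le andbT; apply: contraNneq p0 => spq'.
have : lead_coef (p - q) = 0.
  by rewrite lead_coefE spq' coefB -lead_coefE spq -lead_coefE lpq subrr.
by move/eqP; rewrite lead_coef_eq0 -size_poly_eq0 spq' size_poly_eq0.
Qed.

(* The n summands share their degree and leading coefficient; n%:R != 0 rules
   out cancellation. *)
Lemma size_sumXX g h n : size g = size h -> lead_coef g = lead_coef h ->
  g != 0 -> n%:R != 0 :> K ->
  size (\sum_(i < n) g ^+ (n.-1 - i) * h ^+ i) = ((size g).-1 * n.-1).+1%N.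
Proof.
move=> sgh lgh g0 n0; set d := ((size g).-1 * n.-1)%N.
have h0 : h != 0 by rewrite -size_poly_eq0 -sgh size_poly_eq0.
have term i : (i < n)%N -> size (g ^+ (n.-1 - i) * h ^+ i) = d.+1 /\
    lead_coef (g ^+ (n.-1 - i) * h ^+ i) = lead_coef g ^+ n.-1.
  move=> ltin; have lei : (i <= n.-1)%N by rewrite -ltnS prednK ?(leq_ltn_trans _ ltin).
  split; last by rewrite lead_coefM !lead_coef_exp -lgh -exprD subnK.
  rewrite size_mul ?expf_neq0 // (polySpred (expf_neq0 _ g0)).
  by rewrite (polySpred (expf_neq0 _ h0)) addSn addnS /= !size_exp -sgh -mulnDr subnK.
have coef_d : (\sum_(i < n) g ^+ (n.-1 - i) * h ^+ i)`_d = lead_coef g ^+ n.-1 *+ n.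
  rewrite coef_sum (eq_bigr (fun _ => lead_coef g ^+ n.-1)) ?sumr_const ?card_ord //.
  by move=> i _; have [s <-] := term i (ltn_ord i); rewrite lead_coefE s.
apply/eqP; rewrite eqn_leq; apply/andP; split.
  apply/leq_sizeP => j ltdj; rewrite coef_sum big1 // => i _.
  by rewrite nth_default // (proj1 (term i (ltn_ord i))).
rewrite ltnNge; apply/negP => /leq_sizeP/(_ d (leqnn d))/eqP.
by rewrite coef_d -mulr_natr mulf_eq0 expf_eq0 lead_coef_eq0 (negbTE g0) (negbTE n0) andbF.
Qed.

Lemma size_subrXX g h n : size g = size h -> lead_coef g = lead_coef h ->
  n%:R != 0 :> K -> g != h ->
  size (g ^+ n - h ^+ n) = (size (g - h)%R + (size g).-1 * n.-1)%N.
Proof.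
move=> sgh lgh n0 gh; have g0 : g != 0.
  apply: contraNneq gh => g0.
  by rewrite g0 eq_sym -size_poly_eq0 -sgh g0 size_poly0.
rewrite subrXX size_mul ?subr_eq0 // -?size_poly_eq0 size_sumXX //.
by rewrite addnS.
Qed.

Lemma poly_lead_decomp p : exists2 p0 : {poly K},
  (size p0 <= (size p).-1)%N & p = p0 + lead_coef p *: 'X^((size p).-1).
Proof.
exists (take_poly (size p).-1 p); first exact: size_take_poly.
apply/polyP => i; rewrite coefD coef_take_poly coefZ coefXn.
case: (ltngtP i (size p).-1) => [_|lti|->]; rewrite ?mulr0 ?addr0 ?mulr1 ?add0r ?lead_coefE //.
by rewrite nth_default // (leq_trans (leqSpred _) lti).
Qed.

Lemma comp_lead_part_eq p0 (l : K) n g h :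
  (p0 + l *: 'X^n) \Po g = (p0 + l *: 'X^n) \Po h ->
  l *: (g ^+ n - h ^+ n) = (p0 \Po h) - (p0 \Po g).
Proof.
rewrite !comp_polyD !comp_polyZ !comp_Xn_poly => E.
by apply/eqP; rewrite scalerBr subr_eq addrAC -E addrAC subrr add0r.
Qed.

Lemma tame_deg_gt0 {p} : tame p -> (0 < (size p).-1)%N.
Proof. by move/tame_size_gt1; rewrite -subn1 subn_gt0. Qed.

Lemma tame_lead_coef_neq0 {p} : tame p -> lead_coef p != 0.
Proof.
by move/tame_size_gt1; rewrite lead_coef_eq0 -size_poly_eq0; case: (size p).
Qed.

Lemma tame_comp_shift_id {p c} : tame p -> p \Po ('X + c%:P) = p -> c = 0.
Proof.
move=> tp E; apply/eqP/contraT => c0.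
have [p0 sp0 dp] := poly_lead_decomp p.
set n := (size p).-1 in sp0 dp; have n0 : n%:R != 0 := tame_natr_deg_neq0 tp.
have n_gt0 : (0 < n)%N := tame_deg_gt0 tp.
have /comp_lead_part_eq key :
    (p0 + lead_coef p *: 'X^n) \Po ('X + c%:P) = (p0 + lead_coef p *: 'X^n) \Po 'X.
  by rewrite -dp comp_polyXr.
have sz_key : size ((p0 \Po 'X) - (p0 \Po ('X + c%:P))) = n.
  rewrite -key size_scale ?tame_lead_coef_neq0 // size_subrXX ?size_XaddC ?size_polyX //.
  - by rewrite addrAC subrr add0r size_polyC c0 mul1n add1n prednK.
  - by rewrite lead_coefXaddC lead_coefX.
  - by rewrite -subr_eq0 addrAC subrr add0r polyC_eq0.
suff : (size ((p0 \Po 'X) - (p0 \Po ('X + c%:P)))%R < n)%N by rewrite sz_key ltnn.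
rewrite comp_polyXr; have [->|p00] := eqVneq p0 0.
  by rewrite comp_poly0 subrr size_poly0.
apply: leq_trans sp0; apply: size_subr_lt p00 _ _.
  by rewrite size_comp_poly2 ?size_XaddC.
by rewrite lead_coef_comp ?size_XaddC // lead_coefXaddC expr1n mulr1.
Qed.

(* lc(p) (r^n - (al Q)^n) = p0(Q) - p0(r) with deg p0 < n = deg p; the left side
   has degree deg (r - al Q) + (n - 1) deg Q, so r - al Q is constant. *)
Lemma tame_comp_eq {p r Q al} : tame p -> (1 < size Q)%N -> size r = size Q ->
  lead_coef r = al * lead_coef Q -> al ^+ (size p).-1 = 1 ->
  p \Po r = p \Po Q -> exists b, r = al *: Q + b%:P.
Proof.
move=> tp sQ srQ lrQ aln E.
have [p0 sp0 dp] := poly_lead_decomp p.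
set n := (size p).-1 in sp0 dp aln; have n0 : n%:R != 0 := tame_natr_deg_neq0 tp.
have al0 : al != 0.
  by apply: contra_eq_neq aln => ->; rewrite expr0n gtn_eqF ?(tame_deg_gt0 tp) // eq_sym oner_eq0.
have key : lead_coef p *: (r ^+ n - (al *: Q) ^+ n) = (p0 \Po Q) - (p0 \Po r).
  by rewrite exprZn aln scale1r; apply: comp_lead_part_eq; rewrite -dp.
have [->|neq_rQ] := eqVneq r (al *: Q); first by exists 0; rewrite addr0.
have le_rhs : (size ((p0 \Po Q) - (p0 \Po r))%R <= ((size Q).-1 * n.-1).+1)%N.
  rewrite (leq_trans (size_polyD _ _)) // size_polyN geq_max.
  have le_p0 : ((size p0).-1 <= n.-1)%N by rewrite -!subn1 leq_sub2r.
  by rewrite !(leq_trans (size_comp_poly_leq _ _)) // ltnS ?srQ mulnC leq_mul2l le_p0 orbT.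
move: le_rhs; rewrite -key size_scale ?tame_lead_coef_neq0 //.
rewrite size_subrXX ?size_scale ?lead_coefZ // srQ -addn1 addnC leq_add2l => le_1.
by exists (r - al *: Q)`_0; rewrite -(size1_polyC le_1) addrC subrK.
Qed.

Lemma fixed_affine_expr_deg {f a b} : f != 0 -> a != 0 ->
  f \Po affine a b = f -> a ^+ (size f).-1 = 1.
Proof.
move=> f0 a0 /(congr1 lead_coef); rewrite lead_coef_comp ?size_affine //.
rewrite lead_coef_affine // -[RHS]mulr1 => /mulfI; apply.
by rewrite lead_coef_eq0.
Qed.

Lemma fixed_comp_affine {p Q a b} : tame p -> (1 < size Q)%N -> a != 0 ->
  (p \Po Q) \Po affine a b = p \Po Q ->
  exists b', p \Po affine (a ^+ (size Q).-1) b' = p /\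
             Q \Po affine a b = a ^+ (size Q).-1 *: Q + b'%:P.
Proof.
move=> tp sQ a0 E; set m := (size Q).-1.
have pQ0 : p \Po Q != 0.
  by rewrite comp_poly_eq0 // -lead_coef_eq0 tame_lead_coef_neq0.
have aln : (a ^+ m) ^+ (size p).-1 = 1.
  by rewrite -exprM mulnC -size_comp_poly (fixed_affine_expr_deg pQ0 a0 E).
have [b' rQ] : exists b', Q \Po affine a b = a ^+ m *: Q + b'%:P.
  apply: (tame_comp_eq tp sQ _ _ aln); rewrite ?comp_polyA //.
    by rewrite size_comp_poly2 ?size_affine.
  by rewrite lead_coef_comp ?size_affine // lead_coef_affine // mulrC.
exists b'; split=> //; apply/eqP; rewrite -subr_eq0 -(comp_poly_eq0 _ sQ).
rewrite comp_polyB -comp_polyA comp_polyD comp_polyZ comp_polyX comp_polyC -rQ.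
by rewrite comp_polyA E subrr.
Qed.

Lemma polyF_inj : injective (fun p : {poly K} => polyF p).
Proof. by move=> p q /eqP; rewrite tofrac_eq => /eqP. Qed.

Lemma rcomp_polyF f g : rcomp f (polyF g) = polyF (f \Po g).
Proof. by rewrite /rcomp horner_map. Qed.

Definition homogenize f A B : {poly K} :=
  \sum_(i < size f) f`_i *: (A ^+ i * B ^+ ((size f).-1 - i)).

Lemma rcomp_frac f A B : B != 0 ->
  rcomp f (polyF A / polyF B) * polyF B ^+ (size f).-1 = polyF (homogenize f A B).
Proof.
move=> B0; have B'0 : polyF B != 0 by rewrite tofrac_eq0.
rewrite /rcomp horner_coef size_map_inj_poly ?rmorph0 //; last first.
  by move=> x y /polyF_inj.
rewrite size_map_polyC mulr_suml rmorph_sum; apply: eq_bigr => i _.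
have lei : (i <= (size f).-1)%N by rewrite -ltnS (leq_trans (ltn_ord i)) // leqSpred.
rewrite !coef_map /= -mul_polyC !rmorphM /= !rmorphXn /= expr_div_n -mulrA.
by congr (_ * _); rewrite -{1}(subnKC lei) exprD mulrA mulfVK ?expf_neq0.
Qed.

Lemma horner_homogenize_root f A B x : root B x ->
  (homogenize f A B).[x] = lead_coef f * A.[x] ^+ (size f).-1.
Proof.
move=> /eqP Bx; have [->|f0] := eqVneq f 0.
  by rewrite /homogenize size_poly0 big_ord0 horner0 lead_coef0 mul0r.
rewrite /homogenize (polySpred f0) big_ord_recr /= hornerD horner_sum.
rewrite big1 ?add0r => [|i _].
  by rewrite subnn expr0 mulr1 hornerZ horner_exp lead_coefE.
rewrite hornerZ hornerM !horner_exp Bx expr0n subn_eq0 leqNgt ltn_ord /=.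
by rewrite !mulr0.
Qed.

(* Clearing denominators, f(A/B) B^n = g B^n, and evaluating at the pole -d/c
   leaves lc(f) A(-d/c)^n = 0. *)
Lemma rcomp_mobius_pole f g a b c d : (1 < size f)%N -> a * d - b * c != 0 ->
  c != 0 -> rcomp f (polyF (affine a b) / polyF (affine c d)) != polyF g.
Proof.
move=> sf det c0; apply/eqP => fu.
set x := - d / c.
have Bx : root (affine c d) x.
  by rewrite rootE hornerD hornerZ hornerX hornerC /x; apply/eqP; field.
have Ax : (affine a b).[x] != 0.
  have : (affine a b).[x] * c = - (a * d - b * c).
    by rewrite hornerD hornerZ hornerX hornerC /x; field.
  by apply: contra_eq_neq => ->; rewrite mul0r eq_sym oppr_eq0.
have B0 : affine c d != 0 by rewrite -size_poly_eq0 size_affine.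
have := rcomp_frac f (affine a b) (affine c d) B0; rewrite fu -tofracXn -tofracM => /polyF_inj.
move=> /(congr1 (horner^~ x)); rewrite horner_homogenize_root // hornerM horner_exp.
rewrite (eqP Bx) expr0n gtn_eqF ?mulr0; last by rewrite -subn1 subn_gt0.
move/esym/eqP; rewrite mulf_eq0 expf_eq0 (negbTE Ax) andbF orbF lead_coef_eq0.
by rewrite -size_poly_eq0; case: (size f) sf.
Qed.

Lemma fixing_group_affine {f u} : (1 < size f)%N -> in_fixing_group f u ->
  exists a b, [/\ a != 0, u = polyF (affine a b) & f \Po affine a b = f].
Proof.
move=> sf [[a [b [c [d [det def_u]]]]] fu].
have c0 : c = 0.
  apply/eqP/contraT => c0.
  by case/negP: (rcomp_mobius_pole f f a b c d sf det c0); rewrite -def_u fu.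
move: det; rewrite c0 mulr0 subr0 mulf_eq0 negb_or => /andP [a0 d0].
have u_aff : u = polyF (affine (a / d) (b / d)).
  have dA : affine a b = d%:P * affine (a / d) (b / d).
    by rewrite mulrDr mul_polyC scalerA -polyCM ![d * (_ / d)]mulrC !divfK.
  by rewrite def_u c0 scale0r add0r dA tofracM mulrAC divff ?mul1r // tofrac_eq0 polyC_eq0.
exists (a / d), (b / d); split=> //; first by rewrite mulf_neq0 ?invr_eq0.
by apply: polyF_inj; rewrite -rcomp_polyF -u_aff.
Qed.

Lemma affine_in_fixing_group f a b : a != 0 ->
  f \Po affine a b = f -> in_fixing_group f (polyF (affine a b)).
Proof.
move=> a0 fab; split; last by rewrite rcomp_polyF fab.
exists a, b, 0, 1; rewrite mulr1 mulr0 subr0 scale0r add0r tofrac1 divr1.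
by split.
Qed.

Lemma polyF_affine_inj a b a' b' :
  polyF (affine a b) = polyF (affine a' b') -> a = a' /\ b = b'.
Proof.
move/polyF_inj => E.
have coef1 (x y : K) : (affine x y)`_1 = x by rewrite coefD coefZ coefX coefC mulr1 addr0.
have coef0 (x y : K) : (affine x y)`_0 = y by rewrite coefD coefZ coefX coefC mulr0 add0r.
by split; [rewrite -(coef1 a b) E coef1 | rewrite -(coef0 a b) E coef0].
Qed.

Lemma tame_fixed_affine_inj {f a b1 b2} : tame f -> a != 0 ->
  f \Po affine a b1 = f -> f \Po affine a b2 = f -> b1 = b2.
Proof.
move=> tf a0 fb1 fb2; apply/esym/eqP; rewrite -subr_eq0; apply/eqP.
set w := affine a^-1 (- (b1 / a)).
have aff_w b : affine a b \Po w = 'X + (b - b1)%:P.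
  by rewrite comp_affine mulfV // scale1r; congr (_ + _%:P); field.
apply: (tame_comp_shift_id tf).
by rewrite -aff_w comp_polyA fb2 -{1}fb1 -comp_polyA aff_w subrr polyC0 addr0 comp_polyXr.
Qed.

(* The slopes of Gamma(f); by fixing_slopes_seq they enumerate Gamma(f) when f is
   tame. *)
Definition fixing_slope f a : Prop := a != 0 /\ exists b, f \Po affine a b = f.

Lemma fixing_slope1 f : fixing_slope f 1.
Proof. by split; [exact: oner_neq0 | exists 0; rewrite scale1r addr0 comp_polyXr]. Qed.

Lemma fixing_slopeM f a1 a2 :
  fixing_slope f a1 -> fixing_slope f a2 -> fixing_slope f (a1 * a2).
Proof.
move=> [a10 [b1 fb1]] [a20 [b2 fb2]]; split; first by rewrite mulf_neq0.
by exists (a1 * b2 + b1); rewrite -comp_affine comp_polyA fb1 fb2.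
Qed.

Lemma fixing_slopeX {f a} n : fixing_slope f a -> fixing_slope f (a ^+ n).
Proof.
move=> fa; elim: n => [|n IHn]; first exact: fixing_slope1.
by rewrite exprS; apply: fixing_slopeM.
Qed.

Lemma fixing_slope_polyX a : fixing_slope 'X a -> a = 1.
Proof.
case=> _ [b /(congr1 (fun q : {poly K} => q`_1))].
by rewrite comp_polyX coefD coefZ !coefX coefC mulr1 addr0.
Qed.

Lemma fixing_slopes_seq {f k} : tame f -> fixing_group_order f k ->
  exists l : seq K, [/\ uniq l, size l = k & forall a, a \in l <-> fixing_slope f a].
Proof.
move=> tf [s [us memsP <-]]; have sf := tame_size_gt1 tf.
pose R u a := a != 0 /\ exists b, u = polyF (affine a b).
have [||| l [ul sl memlP]] := @uniq_rel_image _ _ R s us.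
- move=> u /memsP/(fixing_group_affine sf)[a [b [a0 -> _]]].
  by exists a; split=> //; exists b.
- by move=> u a1 a2 [_ [b1 ->]] [_ [b2 /polyF_affine_inj[]]].
- move=> u1 u2 /memsP[_ fu1] /memsP[_ fu2] a [a0 [b1 def_u1]] [_ [b2 def_u2]].
  move: fu1 fu2; rewrite def_u1 def_u2 !rcomp_polyF => /polyF_inj fb1 /polyF_inj fb2.
  by rewrite (tame_fixed_affine_inj tf a0 fb1 fb2).
exists l; split=> // a; rewrite memlP; split.
  case=> u /memsP[_ fu] [a0 [b def_u]]; split=> //; exists b.
  by apply: polyF_inj; rewrite -rcomp_polyF -def_u.
case=> a0 [b fab]; exists (polyF (affine a b)); first exact/memsP/affine_in_fixing_group.
by split=> //; exists b.
Qed.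

Lemma fixing_slopes_mul_closed {f} {l : seq K} :
  (forall a, a \in l <-> fixing_slope f a) ->
  [/\ 0 \notin l, 1 \in l & {in l &, forall x y, x * y \in l}].
Proof.
move=> memlP; split; first by apply/negP => /memlP[/eqP].
  exact/memlP/fixing_slope1.
by move=> x y /memlP fx /memlP fy; apply/memlP/fixing_slopeM.
Qed.

Lemma fixing_slope_expr_order {f k a} : tame f -> fixing_group_order f k ->
  fixing_slope f a -> a ^+ k = 1.
Proof.
move=> tf fk fa; have [l [ul <- memlP]] := fixing_slopes_seq tf fk.
have [l0 _ mull] := fixing_slopes_mul_closed memlP.
by apply: (expr_size_mul_closed ul l0 mull); apply/memlP.
Qed.

Lemma fixing_slope_comp {p Q k a} : tame p -> (1 < size Q)%N ->
  fixing_group_order p k -> fixing_slope (p \Po Q) a -> fixing_slope Q (a ^+ k).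
Proof.
move=> tp sQ pk fa; have [a0 [b fab]] := fa.
have [b1 [pb1 _]] := fixed_comp_affine tp sQ a0 fab.
have akm : (a ^+ k) ^+ (size Q).-1 = 1.
  rewrite exprAC (fixing_slope_expr_order tp pk) //.
  by split; [rewrite expf_neq0 | exists b1].
have [ak0 [b' fab']] := fixing_slopeX k fa.
have [b2 []] := fixed_comp_affine tp sQ ak0 fab'.
rewrite akm scale1r => /(tame_comp_shift_id tp)-> Qab'.
by split=> //; exists b'; rewrite Qab' scale1r addr0.
Qed.

Lemma fixing_slope_compose_list (ps : seq {poly K}) (ks : seq nat) a :
  (forall i, (i < size ps)%N -> tame (nth 0 ps i)) -> size ks = size ps ->
  (forall i, (i < size ps)%N -> fixing_group_order (nth 0 ps i) (nth 0%N ks i)) ->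
  fixing_slope (compose_list ps) a -> a ^+ (\prod_(j <- ks) j) = 1.
Proof.
elim: ps ks a => [|p ps IHps] [|k ks] a //= tps sks fps.
  by rewrite big_nil expr1 => /fixing_slope_polyX.
have tps' i : (i < size ps)%N -> tame (nth 0 ps i) by apply: (tps i.+1).
move=> fa; rewrite big_cons exprM.
apply: (IHps _ _ tps' (succn_inj sks)) => [i|]; first exact: (fps i.+1).
apply: (fixing_slope_comp (tps 0%N _)) (fps 0%N _) fa => //.
exact: tame_size_gt1 (tame_compose_list tps').
Qed.
End FixingGroup.

Theorem mainTheorem2 (K : fieldType) (ps : seq {poly K}) (ks : seq nat) (k : nat) :
  (forall i, (i < size ps)%N -> tame (nth 0 ps i)) ->
  size ks = size ps ->
  (forall i, (i < size ps)%N -> fixing_group_order (nth 0 ps i) (nth 0%N ks i)) ->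
  fixing_group_order (compose_list ps) k ->
  (k %| \prod_(j <- ks) j)%N.
Proof.
move=> tps sks fps fk.
have [l [ul <- memlP]] := fixing_slopes_seq (tame_compose_list tps) fk.
have [l0 l1 mull] := fixing_slopes_mul_closed memlP.
apply: (dvdn_size_mul_closed ul l0 l1 mull) => a /memlP.
exact: fixing_slope_compose_list.
Qed.
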